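(* Let $G=(V,E)$ be a simple undirected graph, let $E^2=\{\{u,v\}\in\binom{V}{2}:\operatorname{dist}_G(u,v)\le 2\}$, and let $b\ge 0$. Let $F_1$ be the set of $(x,y)\in\mathbb{Z}_+^{E^2}\times\{0,1\}^V$ satisfying (i) $1-y_u-y_v-y_i\le x_{uv}$ for all $\{u,v\}\in E^2\setminus E$ and all $i\in N_G(u)\cap N_G(v)$, (ii) $1-y_u-y_v\le x_{uv}$ for all $\{u,v\}\in E$, and (iii) $\sum_{v\in V}y_v\le b$; and let $F_2$ be the set of $(x,y)\in\mathbb{Z}_+^{E^2}\times\{0,1\}^V$ satisfying (ii), (iii) and (i') $\dfrac{\sum_{i\in N_G(u)\cap N_G(v)}(1-y_i)}{|N_G(u)\cap N_G(v)|}-y_u-y_v\le x_{uv}$ for all $\{u,v\}\in E^2\setminus E$. Then $F_1=F_2$; that is, in the 2-DCNDP formulation the constraints (i) can be replaced by the constraints (i').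
   Context: The 2-DCNDP (2-hop distance-based critical node detection problem) MIP minimizes $\sum_{e\in E^2}x_e$ subject to (i)–(iii), where $y_v=1$ means vertex $v$ is deleted and $x_{uv}=1$ indicates that $u,v$ remain connected by a path of length at most $2$. $N_G(v)$ is the neighbor set of $v$; for $\{u,v\}\in E^2\setminus E$, $N_G(u)\cap N_G(v)\neq\emptyset$. *)

From HB Require Import structures.
From mathcomp Require Import all_boot all_order all_algebra.
Set Implicit Arguments. Unset Strict Implicit. Unset Printing Implicit Defensive.
Import Order.TTheory GRing.Theory Num.Theory.
Local Open Scope ring_scope.

Section DCNDP.
Variables (T : finType) (e : rel T) (R : realFieldType).

Definition nbhd (v : T) : {set T} := [set i | e v i].

Definition inE2 (p : {set T}) : Prop :=
  exists u v, [/\ u != v, p = [set u; v] &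
    (e u v || [exists i, e u i && e i v])].

Definition inE (p : {set T}) : Prop :=
  exists u v, p = [set u; v] /\ e u v.

(* x : indexed by 2-subsets (only values on E^2 matter); y : 0/1 vector *)
Definition yR (y : T -> bool) (v : T) : R := (y v)%:R.
Definition xR (x : {set T} -> int) (p : {set T}) : R := (x p)%:~R.

Definition common_F (b : R) (x : {set T} -> int) (y : T -> bool) : Prop :=
  (forall p, inE2 p -> (0 <= x p)%R) /\
  (forall u v, e u v -> 1 - yR y u - yR y v <= xR x [set u; v]) /\
  (\sum_(v : T) yR y v <= b).

Definition F1 (b : R) (x : {set T} -> int) (y : T -> bool) : Prop :=
  common_F b x y /\
  (forall u v, u != v -> inE2 [set u; v] -> ~ inE [set u; v] ->
     forall i, i \in nbhd u :&: nbhd v ->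
       1 - yR y u - yR y v - yR y i <= xR x [set u; v]).

Definition F2 (b : R) (x : {set T} -> int) (y : T -> bool) : Prop :=
  common_F b x y /\
  (forall u v, u != v -> inE2 [set u; v] -> ~ inE [set u; v] ->
     (\sum_(i in nbhd u :&: nbhd v) (1 - yR y i)) / #|nbhd u :&: nbhd v|%:R
       - yR y u - yR y v <= xR x [set u; v]).
End DCNDP.

From HB Require Import structures.
From mathcomp Require Import all_boot all_order all_algebra.
Import Order.TTheory GRing.Theory Num.Theory.
Local Open Scope ring_scope.

(* With y binary, the terms 1 - y_i in the constraints (i) for a
   pair {u,v} are 0/1 values, and their average over N(u) ∩ N(v) lies in
   (0,1] exactly when one of them is 1.  Since x_uv + y_u + y_v is a
   nonnegative integer, it dominates a number in (0,1] iff it dominates 1,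
   so it dominates the average iff it dominates every 1 - y_i.  The
   equivalence thus holds pair by pair, for any relation e and any b. *)

Section BoolMean.
Variables (R : numFieldType) (T : finType) (S : {set T}) (f : T -> bool).

Local Notation mean := ((\sum_(i in S) (f i)%:R) / #|S|%:R : R).

Lemma bool_mean_le1 : mean <= 1.
Proof.
have [->|S_gt0] := posnP #|S|; first by rewrite invr0 mulr0 ler01.
rewrite ler_pdivrMr ?ltr0n // mul1r -sumr_const.
by apply: ler_sum => i _; rewrite lern1 leq_b1.
Qed.

Lemma bool_mean_gt0 i : i \in S -> f i -> 0 < mean.
Proof.
move=> iS fi; have S_gt0 : (0 < #|S|)%N by apply/card_gt0P; exists i.
rewrite divr_gt0 ?ltr0n // (bigD1 i) //= fi.
by rewrite ltr_wpDr ?ltr01 // sumr_ge0.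
Qed.

(* This holds for S empty as well, where the mean is 0 since 0^-1 = 0. *)
Lemma bool_mean_le_nat (k : nat) :
  (forall i, i \in S -> (f i)%:R <= k%:R :> R) <-> mean <= k%:R.
Proof.
case: k => [|k]; split.
- move=> f_le0; rewrite big1 ?mul0r // => i iS.
  by apply/eqP; rewrite pnatr_eq0 -(lern0 R); apply: f_le0.
- move=> mean_le0 i iS; case fi: (f i) => //.
  by have := lt_le_trans (bool_mean_gt0 i iS fi) mean_le0; rewrite ltxx.
- by move=> _; apply: le_trans bool_mean_le1 _; rewrite ler1n.
- by move=> _ i _; rewrite ler_nat; case: (f i).
Qed.

End BoolMean.

Lemma one_minus_yR (R : realFieldType) (T : finType) (y : T -> bool) i :
  1 - yR R y i = (~~ y i)%:R.
Proof. by rewrite /yR; case: (y i); rewrite ?subrr ?subr0. Qed.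

Lemma cuts_iff_mean_cut (R : realFieldType) (T : finType) (S : {set T})
    (y : T -> bool) (u v : T) (z : int) : 0 <= z ->
  (forall i, i \in S -> 1 - yR R y u - yR R y v - yR R y i <= z%:~R) <->
  (\sum_(i in S) (1 - yR R y i)) / #|S|%:R - yR R y u - yR R y v <= z%:~R.
Proof.
move=> z_ge0; set k := (`|z| + y u + y v)%N.
have shift a : (a - yR R y u - yR R y v <= z%:~R) = (a <= k%:R).
  by rewrite !lerBlDr /k !natrD -[z in LHS]gez0_abs // addrAC.
have cutE i :
    (1 - yR R y u - yR R y v - yR R y i <= z%:~R) = ((~~ y i)%:R <= k%:R :> R).
  by rewrite -one_minus_yR -shift (addrAC _ (- _) (- yR R y i)) (addrAC 1).
under eq_bigr do rewrite one_minus_yR.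
rewrite shift; apply: iff_trans _ (bool_mean_le_nat R T S (fun i => ~~ y i) k).
by split=> cut i iS; [rewrite -cutE | rewrite cutE]; apply: cut.
Qed.

Theorem theorem1 (R : realFieldType) (T : finType) (e : rel T)
  (e_sym : symmetric e) (e_irr : irreflexive e) (b : R) (hb : 0 <= b)
  (x : {set T} -> int) (y : T -> bool) :
  F1 e b x y <-> F2 e b x y.
Proof.
split=> -[C cuts]; split=> // u v uv uvE2 uvnE.
all: have [cuts_mean mean_cuts] :=
  cuts_iff_mean_cut R _ (nbhd e u :&: nbhd e v) y u v _ (C.1 _ uvE2).
- exact/cuts_mean/cuts.
- exact/mean_cuts/cuts.
Qed.
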